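(* Let $t>0$. Consider a vehicle and a target with relative state $\Upsilon(k)=(\bm{q}(k),\bm{\vartheta}(k))\in\mathbb{R}^6$ (relative position and relative velocity in the world frame) evolving as $$\Upsilon(k+1)=A\Upsilon(k)+B\big(\bm{R}(k)\,{}^{b}\bm{u}_1(k)-\bar{\bm{u}}(k)\big),\quad A=\begin{bmatrix} I_3& tI_3\\ 0& I_3\end{bmatrix},\ B=\begin{bmatrix}\tfrac12 t^2 I_3\\ tI_3\end{bmatrix},$$ where $\bm{R}(k)\in SO(3)$ is the vehicle orientation and the target acceleration $\bar{\bm{u}}(k)$ is zero-mean Gaussian with covariance $W$ satisfying $\hat\sigma I_3\le W\le \check\sigma I_3$ for some $\hat\sigma,\check\sigma>0$, independent of the other quantities at time $k$. Let $\hat\Upsilon(k)=(\hat{\bm{q}}(k),\hat{\bm{\vartheta}}(k))$ be an estimate of $\Upsilon(k)$, let ${}^{b}\bm{q}^*\in\mathbb{R}^3$ be a desired relative position in the body frame, and apply the tracking control $${}^{b}\bm{u}_1(k)=-\frac{2\alpha}{t^2}\big(\bm{R}^{-1}(k)\hat{\bm{q}}(k)-{}^{b}\bm{q}^*\big)-\frac{2}{t}\bm{R}^{-1}(k)\hat{\bm{\vartheta}}(k).$$ Define the tracking error $\bm{e}(k)=\bm{q}(k)-\bm{R}(k)\,{}^{b}\bm{q}^*$ and $\bar\alpha=(\alpha I_3,\ tI_3)\in\mathbb{R}^{3\times 6}$, and assume $$\sigma:=\sup_k 2\,\mathbf{E}\big\{\|\bar\alpha(\Upsilon(k)-\hat\Upsilon(k))+(\bm{R}(k)-\bm{R}(k+1))\,{}^{b}\bm{q}^*\|^2\big\}<\infty.$$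 If $\alpha\in\big(1-\tfrac{1}{\sqrt2},\,1+\tfrac{1}{\sqrt2}\big)$, then $2(1-\alpha)^2-1<0$ and the tracking error is bounded in mean square: $\mathbf{E}\{\|\bm{e}(k)\|^2\}$ remains bounded for all $k$ (the vehicle maintains the desired relative position ${}^{b}\bm{q}^*$ up to a bounded error).
   Context: $SO(3)$ denotes the group of $3\times 3$ rotation matrices. $\mathbf{E}$ denotes expectation. The estimate $\hat\Upsilon(k)$ is produced by a Kalman filter, but the claim only uses the finiteness of $\sigma$. *)

From HB Require Import structures.
From mathcomp Require Import all_boot all_order all_algebra.
From mathcomp Require Import all_classical all_reals all_analysis.
Set Implicit Arguments. Unset Strict Implicit. Unset Printing Implicit Defensive.
Import Order.TTheory GRing.Theory Num.Theory.
Local Open Scope classical_set_scope.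
Local Open Scope ring_scope.

Section defs.
Context {R : realType}.

Definition sqnorm n (v : 'cV[R]_n) : R := \sum_(i < n) (v i 0) ^+ 2.

Definition is_SO3 (M : 'M[R]_3) : Prop := M^T *m M = 1%:M /\ \det M = 1.

Definition Amat (t : R) : 'M[R]_(3 + 3) := block_mx 1%:M (t%:M) 0 1%:M.
Definition Bmat (t : R) : 'M[R]_(3 + 3, 3) := col_mx ((t ^+ 2 / 2)%:M) (t%:M).
Definition alphabar (alpha t : R) : 'M[R]_(3, 3 + 3) := row_mx (alpha%:M) (t%:M).

Definition posq (x : 'cV[R]_(3 + 3)) : 'cV[R]_3 := usubmx x.
Definition velq (x : 'cV[R]_(3 + 3)) : 'cV[R]_3 := dsubmx x.

Definition control (alpha t : R) (Rk : 'M[R]_3) (xhat : 'cV[R]_(3 + 3))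
  (bqs : 'cV[R]_3) : 'cV[R]_3 :=
  - ((2 * alpha / t ^+ 2) *: (invmx Rk *m posq xhat - bqs))
  - ((2 / t) *: (invmx Rk *m velq xhat)).

Definition loewner_bounds (W : 'M[R]_3) (s1 s2 : R) : Prop :=
  W^T = W /\
  forall x : 'cV[R]_3,
    s1 * (x^T *m x) 0 0 <= (x^T *m W *m x) 0 0 <= s2 * (x^T *m x) 0 0.

End defs.

Section prob_defs.
Context {d : measure_display} {T : measurableType d} {R : realType}.

(* X : T -> R^3 is zero-mean Gaussian with covariance W (Cramer--Wold form):
   every nonzero linear functional a^T X is N(0, a^T W a). *)
Definition gaussian0 (P : probability T R) (X : T -> 'cV[R]_3) (W : 'M[R]_3) :=
  forall a : 'cV[R]_3, a != 0 ->
    forall A : set R, measurable A ->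
      P ((fun w => (a^T *m X w) 0 0) @^-1` A) =
      normal_prob 0 (Num.sqrt ((a^T *m W *m a) 0 0)) A.

(* independence of two finite families of real random variables
   (independence of the generated sigma-algebras, via the product rule on
   the generating pi-systems) *)
Definition indep_families (I J : finType) (P : probability T R)
  (X : I -> T -> R) (Y : J -> T -> R) : Prop :=
  forall (A : I -> set R) (B : J -> set R),
    (forall i, measurable (A i)) -> (forall j, measurable (B j)) ->
    P ((\bigcap_(i in [set: I]) (X i @^-1` A i)) `&`
       (\bigcap_(j in [set: J]) (Y j @^-1` B j))) =
    (P (\bigcap_(i in [set: I]) (X i @^-1` A i)) *
     P (\bigcap_(j in [set: J]) (Y j @^-1` B j)))%E.

(* the coordinates of the other quantities at time k:
   Upsilon(k), Upsilon_hat(k), R(k), R(k+1) *)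
Definition time_k_coords (Ups Upshat : T -> 'cV[R]_(3 + 3))
  (Rk Rk1 : T -> 'M[R]_3) :
  ('I_(3 + 3) + 'I_(3 + 3) + ('I_3 * 'I_3) + ('I_3 * 'I_3))%type -> T -> R :=
  fun c => match c with
  | inl (inl (inl i)) => fun w => Ups w i 0
  | inl (inl (inr i)) => fun w => Upshat w i 0
  | inl (inr (i, j)) => fun w => Rk w i j
  | inr (i, j) => fun w => Rk1 w i j
  end.

End prob_defs.

From HB Require Import structures.
From mathcomp Require Import all_boot all_order all_algebra.
From mathcomp Require Import all_classical all_reals all_analysis.
From mathcomp Require Import ring lra measurable_realfun.
Import Order.TTheory GRing.Theory Num.Theory.
Local Open Scope classical_set_scope.
Local Open Scope ring_scope.

(* The tracking error obeys the recursion
     e(k+1) = (1 - alpha) e(k) + xi(k) - (t^2/2) ubar(k),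
   with xi(k) = alphabar (Ups(k) - Upshat(k)) + (R(k) - R(k+1)) bqs the term
   measured by sigma. Since |a + b + c|^2 <= 2|a|^2 + 4|b|^2 + 4|c|^2,
     E|e(k+1)|^2 <= 2 (1 - alpha)^2 E|e(k)|^2 + 2 sigma + t^4 E|ubar(k)|^2,
   which is a contraction exactly for alpha in the stated interval. As the
   Gaussian second moment is finite, E|e(k)|^2 never exceeds the larger of
   E|e(0)|^2 and the fixed point of this affine bound. *)

Section tracking_error_dynamics.
Context {R : realType}.
Implicit Types (t a : R) (x : 'cV[R]_(3 + 3)).

Lemma posqD x y : posq (x + y) = posq x + posq y.
Proof. exact: linearD. Qed.

Lemma posq_Amat t x : posq (Amat t *m x) = posq x + t *: velq x.
Proof.
rewrite /posq /velq /Amat -[in LHS](vsubmxK x) mul_block_col col_mxKu.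
by rewrite mul1mx mul_scalar_mx.
Qed.

Lemma posq_Bmat t (v : 'cV[R]_3) : posq (Bmat t *m v) = (t ^+ 2 / 2) *: v.
Proof. by rewrite /posq /Bmat mul_col_mx col_mxKu mul_scalar_mx. Qed.

Lemma alphabar_mul a t x : alphabar a t *m x = a *: posq x + t *: velq x.
Proof.
rewrite /alphabar /posq /velq -[in LHS](vsubmxK x) mul_row_col.
by rewrite !mul_scalar_mx.
Qed.

Lemma SO3_unitmx (M : 'M[R]_3) : is_SO3 M -> M \in unitmx.
Proof. by case=> _ detM; rewrite unitmxE detM unitr1. Qed.

Lemma mul_control a t (Rk : 'M[R]_3) xhat (bqs : 'cV[R]_3) :
  Rk \in unitmx ->
  Rk *m control a t Rk xhat bqs =
  - ((2 * a / t ^+ 2) *: (posq xhat - Rk *m bqs)) - (2 / t) *: velq xhat.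
Proof.
move=> Rk_unit; rewrite /control mulmxBr !mulmxN -!scalemxAr mulmxBr.
by rewrite !mulmxA mulmxV // !mul1mx.
Qed.

Lemma tracking_error_step t a (Rk Rk1 : 'M[R]_3) x xhat (ub bqs : 'cV[R]_3) :
  t != 0 -> Rk \in unitmx ->
  posq (Amat t *m x + Bmat t *m (Rk *m control a t Rk xhat bqs - ub))
    - Rk1 *m bqs =
  (1 - a) *: (posq x - Rk *m bqs)
  + (alphabar a t *m (x - xhat) + (Rk - Rk1) *m bqs) - (t ^+ 2 / 2) *: ub.
Proof.
move=> t_neq0 Rk_unit.
rewrite posqD posq_Amat posq_Bmat mul_control // alphabar_mul mulmxBl.
by apply/matrixP => i j; rewrite !mxE; field.
Qed.

End tracking_error_dynamics.

Section sqnorm.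
Context {R : realType} {n : nat}.
Implicit Types u v w : 'cV[R]_n.

Lemma sqnorm_ge0 v : 0 <= sqnorm v.
Proof. by rewrite /sqnorm sumr_ge0 // => i _; rewrite sqr_ge0. Qed.

Lemma sqnormZ (c : R) v : sqnorm (c *: v) = c ^+ 2 * sqnorm v.
Proof.
by rewrite /sqnorm mulr_sumr; apply: eq_bigr => i _; rewrite mxE exprMn.
Qed.

Lemma sqnormN v : sqnorm (- v) = sqnorm v.
Proof. by rewrite -scaleN1r sqnormZ sqrrN expr1n mul1r. Qed.

Lemma sqnormD3_le u v w :
  sqnorm (u + v + w) <= 2 * sqnorm u + 4 * sqnorm v + 4 * sqnorm w.
Proof.
rewrite /sqnorm !mulr_sumr -!big_split /=; apply: ler_sum => i _.
rewrite !mxE -subr_ge0.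
set a := u i 0; set b := v i 0; set c := w i 0.
have -> : 2 * a ^+ 2 + 4 * b ^+ 2 + 4 * c ^+ 2 - (a + b + c) ^+ 2 =
          (a - b - c) ^+ 2 + 2 * (b - c) ^+ 2 by ring.
by rewrite addr_ge0 ?sqr_ge0 // mulr_ge0 ?sqr_ge0.
Qed.

End sqnorm.

Section measurable_mx.
Context {d : measure_display} {T : measurableType d} {R : realType}.

Definition measurable_mx {m n} (F : T -> 'M[R]_(m, n)) :=
  forall i j, measurable_fun setT (fun w => F w i j).

Lemma measurable_cV {n} {F : T -> 'cV[R]_n} :
  (forall i, measurable_fun setT (fun w => F w i 0)) -> measurable_mx F.
Proof. by move=> mF i j; rewrite (ord1 j). Qed.

Lemma measurable_mx_cst {m n} (A : 'M[R]_(m, n)) : measurable_mx (fun=> A).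
Proof. by []. Qed.

Lemma measurable_mxD {m n} {F G : T -> 'M[R]_(m, n)} :
  measurable_mx F -> measurable_mx G -> measurable_mx (fun w => F w + G w).
Proof.
move=> mF mG i j; under eq_fun do rewrite mxE.
exact: measurable_funD.
Qed.

Lemma measurable_mxN {m n} {F : T -> 'M[R]_(m, n)} :
  measurable_mx F -> measurable_mx (fun w => - F w).
Proof.
by move=> mF i j; under eq_fun do rewrite mxE; exact: measurableT_comp.
Qed.

Lemma measurable_mxB {m n} {F G : T -> 'M[R]_(m, n)} :
  measurable_mx F -> measurable_mx G -> measurable_mx (fun w => F w - G w).
Proof. by move=> mF mG; apply: measurable_mxD => //; exact: measurable_mxN. Qed.

Lemma measurable_mxZ {m n} (c : R) {F : T -> 'M[R]_(m, n)} :
  measurable_mx F -> measurable_mx (fun w => c *: F w).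
Proof.
by move=> mF i j; under eq_fun do rewrite mxE; exact: measurable_funM.
Qed.

Lemma measurable_mxM {m n p} {F : T -> 'M[R]_(m, n)} {G : T -> 'M[R]_(n, p)} :
  measurable_mx F -> measurable_mx G -> measurable_mx (fun w => F w *m G w).
Proof.
move=> mF mG i j; under eq_fun do rewrite mxE.
by apply: measurable_sum => k; exact: measurable_funM.
Qed.

Lemma measurable_mx_usub {m1 m2 n} {F : T -> 'M[R]_(m1 + m2, n)} :
  measurable_mx F -> measurable_mx (fun w => usubmx (F w)).
Proof. by move=> mF i j; under eq_fun do rewrite mxE; exact: mF. Qed.

Lemma measurable_mx_dsub {m1 m2 n} {F : T -> 'M[R]_(m1 + m2, n)} :
  measurable_mx F -> measurable_mx (fun w => dsubmx (F w)).
Proof. by move=> mF i j; under eq_fun do rewrite mxE; exact: mF. Qed.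

Lemma measurable_sqnorm {n} {F : T -> 'cV[R]_n} :
  measurable_mx F -> measurable_fun setT (fun w => sqnorm (F w)).
Proof. by move=> mF; apply: measurable_sum => i; exact: measurable_funX. Qed.

End measurable_mx.

Section normal_second_moment.
Context {R : realType}.
Notation mu := (@lebesgue_measure R).

(* With [y := x^2 / (4 s^2)] the left-hand side is [4 s^2 peak_s (y e^-y) e^-y]
   and [y e^-y <= 1]. *)
Lemma sqr_normal_pdf_le (s x : R) : s != 0 ->
  x ^+ 2 * normal_pdf 0 s x <=
  4 * s ^+ 2 * normal_peak s / normal_peak (s * Num.sqrt 2) *
    normal_pdf 0 (s * Num.sqrt 2) x.
Proof.
move=> s_neq0.
have s2_neq0 : s * Num.sqrt 2 != 0 by rewrite mulf_neq0 // gt_eqF // sqrtr_gt0.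
have s_sqr_gt0 : 0 < s ^+ 2 by rewrite exprn_even_gt0.
have peak_gt0 := normal_peak_gt0 s_neq0.
have peak2_gt0 := normal_peak_gt0 s2_neq0.
rewrite !normal_pdfE //= /normal_fun !subr0.
set y := x ^+ 2 / (s ^+ 2 *+ 4).
have -> : - x ^+ 2 / (s ^+ 2 *+ 2) = - y + - y by rewrite /y; field.
have -> : - x ^+ 2 / ((s * Num.sqrt 2) ^+ 2 *+ 2) = - y.
  by rewrite exprMn sqr_sqrtr // /y; field.
have -> : x ^+ 2 = 4 * s ^+ 2 * y by rewrite /y; field.
have y_ge0 : 0 <= y by rewrite /y divr_ge0 ?sqr_ge0 // mulrn_wge0 // ltW.
have y_expRN_le1 : y * expR (- y) <= 1.
  rewrite expRN ler_pdivrMr ?expR_gt0 // mul1r.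
  by apply: le_trans (expR_ge1Dx y); rewrite lerDr.
rewrite expRD.
have -> : 4 * s ^+ 2 * normal_peak s / normal_peak (s * Num.sqrt 2) *
    (normal_peak (s * Num.sqrt 2) * expR (- y)) =
    4 * s ^+ 2 * normal_peak s * expR (- y) by field; rewrite gt_eqF.
have -> : 4 * s ^+ 2 * y * (normal_peak s * (expR (- y) * expR (- y))) =
    4 * s ^+ 2 * normal_peak s * expR (- y) * (y * expR (- y)) by ring.
rewrite -[X in _ <= X]mulr1 ler_wpM2l // mulr_ge0 ?expR_ge0 //.
by rewrite mulr_ge0 ?(ltW peak_gt0) // mulr_ge0 ?sqr_ge0.
Qed.

Local Open Scope ereal_scope.

Lemma ge0_integral_normal_prob (m s : R) (f : R -> \bar R) :
  measurable_fun setT f -> (forall x, 0 <= f x) ->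
  \int[normal_prob m s]_x f x = \int[mu]_x (f x * (normal_pdf m s x)%:E).
Proof.
move=> mf f_ge0.
have dom := normal_prob_dominates m s.
rewrite -(Radon_Nikodym_SigmaFinite.change_of_variables dom) //.
have mpdf : measurable_fun setT (fun x => (normal_pdf m s x)%:E).
  by apply/measurable_EFinP; exact: measurable_normal_pdf.
have RN_int := Radon_Nikodym_SigmaFinite.f_integrable dom.
apply: ae_eq_integral => //.
- by apply: emeasurable_funM => //; exact: measurable_int RN_int.
- exact: emeasurable_funM.
apply: ae_eqe_mul2l; apply: integral_ae_eq => // E _ mE.
by rewrite -Radon_Nikodym_SigmaFinite.f_integral.
Qed.

Lemma normal_prob_sqr_lty (s : R) : (s != 0)%R ->
  \int[normal_prob 0 s]_x (x ^+ 2)%:E < +oo.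
Proof.
move=> s_neq0.
have s2_neq0 : (s * Num.sqrt 2 != 0)%R.
  by rewrite mulf_neq0 // gt_eqF // sqrtr_gt0.
have msqr : measurable_fun setT (fun x : R => (x ^+ 2)%:E).
  by apply/measurable_EFinP; exact: measurable_funX.
have mpdf s' : measurable_fun setT (fun x : R => (normal_pdf 0 s' x)%:E).
  by apply/measurable_EFinP; exact: measurable_normal_pdf.
rewrite ge0_integral_normal_prob //; last by move=> x; rewrite lee_fin sqr_ge0.
set c := (4 * s ^+ 2 * normal_peak s / normal_peak (s * Num.sqrt 2))%R.
have c_ge0 : (0 <= c)%R.
  rewrite /c mulr_ge0 ?invr_ge0 ?normal_peak_ge0 //.
  by rewrite mulr_ge0 ?normal_peak_ge0 // mulr_ge0 ?sqr_ge0.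
apply: (@le_lt_trans _ _
  (\int[mu]_x (c%:E * (normal_pdf 0 (s * Num.sqrt 2) x)%:E))).
  apply: ge0_le_integral => //.
  - by move=> x _; rewrite -EFinM lee_fin mulr_ge0 ?sqr_ge0 ?normal_pdf_ge0.
  - exact: emeasurable_funM msqr (mpdf _).
  - exact: emeasurable_funM (measurable_cst _) (mpdf _).
  - by move=> x _; rewrite -!EFinM lee_fin sqr_normal_pdf_le.
rewrite ge0_integralZl //; first by rewrite integral_normal_pdf mule1 ltry.
- exact: mpdf.
- by move=> x _; rewrite lee_fin normal_pdf_ge0.
Qed.

End normal_second_moment.

Section law.
Context {d d' : measure_display} {T : measurableType d} {Y : measurableType d'}
  {R : realType}.
Local Open Scope ereal_scope.

Lemma ge0_integral_law (P : {measure set T -> \bar R})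
    (nu : {measure set Y -> \bar R}) (X : T -> Y) (f : Y -> \bar R) :
  measurable_fun setT X ->
  (forall A, measurable A -> P (X @^-1` A) = nu A) ->
  measurable_fun setT f -> (forall y, 0 <= f y) ->
  \int[P]_w f (X w) = \int[nu]_y f y.
Proof.
move=> mX lawX mf f_ge0.
have := ge0_integral_pushforward mX P measurableT mf (fun y _ => f_ge0 y).
rewrite preimage_setT => <-.
by apply: eq_measure_integral => A mA _; exact: lawX.
Qed.

End law.

Lemma loewner_bounds_diag {R : realType} {W : 'M[R]_3} {s1 s2 : R} i :
  loewner_bounds W s1 s2 -> s1 <= W i i.
Proof.
case=> _ /(_ (delta_mx i 0)) /andP[+ _].
by rewrite trmx_delta -!rowE -colE !mxE !eqxx mulr1.
Qed.

Section gaussian_vector.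
Context {d : measure_display} {T : measurableType d} {R : realType}.
Variables (P : probability T R) (W : 'M[R]_3).

Lemma gaussian0_coord (X : T -> 'cV[R]_3) i A : gaussian0 P X W ->
  measurable A ->
  P ((fun w => X w i 0) @^-1` A) = normal_prob 0 (Num.sqrt (W i i)) A.
Proof.
move=> gX mA.
have e_neq0 : delta_mx i 0 != 0 :> 'cV[R]_3.
  by apply/eqP => /matrixP/(_ i 0)/eqP; rewrite !mxE !eqxx oner_eq0.
have := gX _ e_neq0 A mA.
rewrite trmx_delta -rowE -colE !mxE.
by under eq_fun do rewrite -rowE mxE.
Qed.

Local Open Scope ereal_scope.

(* Each summand is the variance [W i i] of a coordinate; only finiteness is
   used. *)
Definition gaussian_second_moment : \bar R :=
  \sum_(i < 3) \int[normal_prob 0 (Num.sqrt (W i i))]_x (x ^+ 2)%:E.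

Lemma integral_sqnorm_gaussian0 (X : T -> 'cV[R]_3) : gaussian0 P X W ->
  measurable_mx X ->
  \int[P]_w (sqnorm (X w))%:E = gaussian_second_moment.
Proof.
move=> gX mX; rewrite /sqnorm.
under eq_integral do rewrite -sumEFin.
rewrite ge0_integral_sum //; last 2 first.
- by move=> i; apply/measurable_EFinP; exact: measurable_funX.
- by move=> i w _; rewrite lee_fin sqr_ge0.
apply: eq_bigr => i _.
apply: (ge0_integral_law P (normal_prob 0 (Num.sqrt (W i i)))
  (fun w => X w i 0%R)).
- exact: mX.
- by move=> A mA; exact: gaussian0_coord.
- by apply/measurable_EFinP; exact: measurable_funX.
- by move=> x; rewrite lee_fin sqr_ge0.
Qed.

Lemma gaussian_second_moment_fin_num :
  (forall i, (0 < W i i)%R) -> gaussian_second_moment \is a fin_num.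
Proof.
move=> W_diag_gt0.
rewrite ge0_fin_numE; last first.
  apply: sume_ge0 => i _; apply: integral_ge0 => x _.
  by rewrite lee_fin sqr_ge0.
apply: lte_sum_pinfty => i _; apply: normal_prob_sqr_lty.
by rewrite gt_eqF // sqrtr_gt0.
Qed.

End gaussian_vector.

Section ereal_bounds.
Context {R : realType}.
Local Open Scope ereal_scope.

Lemma le_fine_ereal_sup {S : set (\bar R)} {x} : S x -> ereal_sup S < +oo ->
  x <= (fine (ereal_sup S))%:E.
Proof.
move=> Sx sup_lty; apply: le_trans (ereal_sup_ubound Sx) _.
by move: sup_lty; case: (ereal_sup S) => [r| |] //= _; rewrite leNye.
Qed.

Lemma affine_contraction_bounded (u : nat -> \bar R) (rho K : R) :
  (0 <= rho < 1)%R -> u 0%N < +oo ->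
  (forall k, u k.+1 <= rho%:E * u k + K%:E) ->
  exists M : R, forall k, u k <= M%:E.
Proof.
move=> /andP[rho_ge0 rho_lt1] u0_lty u_step.
have u0_le : u 0%N <= (fine (u 0%N))%:E.
  by move: u0_lty; case: (u 0%N) => [r| |] //= _; rewrite leNye.
exists (Num.max (fine (u 0%N)) (K / (1 - rho))%R); set M := Num.max _ _.
have fix_le_M : (K / (1 - rho) <= M)%R by rewrite /M le_max lexx orbT.
elim=> [|k IH].
  by apply: le_trans u0_le _; rewrite lee_fin /M le_max lexx.
apply: le_trans (u_step k) _.
apply: (@le_trans _ _ (rho%:E * M%:E + K%:E)).
  by rewrite leeD2r // lee_wpmul2l // lee_fin.
rewrite -EFinM -EFinD lee_fin.
move: fix_le_M; rewrite ler_pdivrMr ?subr_gt0 //; nra.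
Qed.

End ereal_bounds.

Section ge0_le_integral_lincomb.
Context {d : measure_display} {T : measurableType d} {R : realType}.
Context {mu : {measure set T -> \bar R}} {a b c : R} {F f g h : T -> R}.
Hypotheses (a_ge0 : 0 <= a) (b_ge0 : 0 <= b) (c_ge0 : 0 <= c).
Hypotheses (F_ge0 : forall x, 0 <= F x) (f_ge0 : forall x, 0 <= f x)
  (g_ge0 : forall x, 0 <= g x) (h_ge0 : forall x, 0 <= h x).
Hypotheses (mF : measurable_fun setT F) (mf : measurable_fun setT f)
  (mg : measurable_fun setT g) (mh : measurable_fun setT h).
Local Open Scope ereal_scope.

Lemma ge0_le_integral_lincomb3 :
  (forall x, F x <= a * f x + b * g x + c * h x)%R ->
  \int[mu]_x (F x)%:E <= a%:E * \int[mu]_x (f x)%:E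
    + b%:E * \int[mu]_x (g x)%:E + c%:E * \int[mu]_x (h x)%:E.
Proof.
move=> F_le.
pose f' x := (f x)%:E; pose g' x := (g x)%:E; pose h' x := (h x)%:E.
have mf' : measurable_fun setT f' by exact/measurable_EFinP.
have mg' : measurable_fun setT g' by exact/measurable_EFinP.
have mh' : measurable_fun setT h' by exact/measurable_EFinP.
have mZ (r : R) (k : T -> \bar R) : measurable_fun setT k ->
    measurable_fun setT (fun x => r%:E * k x).
  by move=> mk; apply: emeasurable_funM.
apply: le_trans (_ : \int[mu]_x (a%:E * f' x + b%:E * g' x + c%:E * h' x) <= _).
  apply: ge0_le_integral => //.
  - by move=> x _; rewrite lee_fin.
  - exact/measurable_EFinP.
  - by apply: emeasurable_funD; [apply: emeasurable_funD|]; exact: mZ.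
  - by move=> x _; rewrite -!EFinM -!EFinD lee_fin.
rewrite ge0_integralD //; first rewrite ge0_integralD //.
- rewrite (ge0_integralZl mu measurableT mf') //.
  rewrite (ge0_integralZl mu measurableT mg') //.
  rewrite (ge0_integralZl mu measurableT mh') //.
all: try by move=> x _; rewrite ?adde_ge0 ?mule_ge0 ?lee_fin.
all: try by apply: emeasurable_funD; exact: mZ.
all: exact: mZ.
Qed.
End ge0_le_integral_lincomb.

Lemma expectationE {d} {T : measurableType d} {R : realType}
  (P : probability T R) (X : T -> R) : ('E_P[X] = \int[P]_w (X w)%:E)%E.
Proof. by rewrite unlock. Qed.

Section closed_loop.
Context {d : measure_display} {T : measurableType d} {R : realType}.
Context {P : probability T R} {t alpha sigma : R} {W : 'M[R]_3}
  {bqs : 'cV[R]_3} {Ups Upshat : nat -> T -> 'cV[R]_(3 + 3)}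
  {Rot : nat -> T -> 'M[R]_3} {ubar : nat -> T -> 'cV[R]_3}.
Hypothesis t_gt0 : 0 < t.
Hypothesis Rot_SO3 : forall k w, is_SO3 (Rot k w).
Hypothesis mUps0 : forall i, measurable_fun setT (fun w => Ups 0%N w i 0).
Hypothesis mUpshat : forall k i, measurable_fun setT (fun w => Upshat k w i 0).
Hypothesis mRot : forall k i j, measurable_fun setT (fun w => Rot k w i j).
Hypothesis mubar : forall k i, measurable_fun setT (fun w => ubar k w i 0).
Hypothesis ubar_gauss : forall k, gaussian0 P (ubar k) W.
Hypothesis dynamics : forall k w, Ups k.+1 w =
  Amat t *m Ups k w +
  Bmat t *m (Rot k w *m control alpha t (Rot k w) (Upshat k w) bqs - ubar k w).

Let e k w := posq (Ups k w) - Rot k w *m bqs.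
Let xi k w :=
  alphabar alpha t *m (Ups k w - Upshat k w) + (Rot k w - Rot k.+1 w) *m bqs.

Hypothesis xi_bound :
  forall k, (2%:E * 'E_P[fun w => sqnorm (xi k w)] <= sigma%:E)%E.

Lemma closed_loop_error_step k w :
  e k.+1 w = (1 - alpha) *: e k w + xi k w - (t ^+ 2 / 2) *: ubar k w.
Proof. by rewrite /e dynamics tracking_error_step ?gt_eqF ?SO3_unitmx. Qed.

Lemma measurable_Ups k : measurable_mx (Ups k).
Proof.
elim: k => [|k IH]; first exact: measurable_cV.
have mUhat := measurable_cV (mUpshat k).
have -> : Ups k.+1 = fun w => Amat t *m Ups k w + Bmat t *m
    (- ((2 * alpha / t ^+ 2) *: (posq (Upshat k w) - Rot k w *m bqs))
     - (2 / t) *: velq (Upshat k w) - ubar k w).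
  by apply/funext => w; rewrite dynamics mul_control ?SO3_unitmx.
apply: measurable_mxD; first exact: measurable_mxM (measurable_mx_cst _) IH.
apply: measurable_mxM; first exact: measurable_mx_cst.
apply: measurable_mxB; last exact: measurable_cV.
apply: measurable_mxB; last exact/measurable_mxZ/measurable_mx_dsub.
apply/measurable_mxN/measurable_mxZ/measurable_mxB.
  exact: measurable_mx_usub.
exact: measurable_mxM (mRot k) (measurable_mx_cst _).
Qed.

Lemma measurable_tracking_error k : measurable_mx (e k).
Proof.
apply: measurable_mxB; first exact/measurable_mx_usub/measurable_Ups.
exact: measurable_mxM (mRot k) (measurable_mx_cst _).
Qed.

Lemma measurable_xi k : measurable_mx (xi k).
Proof.
apply: measurable_mxD; apply: measurable_mxM.
- exact: measurable_mx_cst.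
- exact: measurable_mxB (measurable_Ups k) (measurable_cV (mUpshat k)).
- exact: measurable_mxB (mRot k) (mRot k.+1).
- exact: measurable_mx_cst.
Qed.

Lemma sqnorm_error_step k w :
  sqnorm (e k.+1 w) <= 2 * (1 - alpha) ^+ 2 * sqnorm (e k w)
    + 4 * sqnorm (xi k w) + 4 * (t ^+ 2 / 2) ^+ 2 * sqnorm (ubar k w).
Proof.
rewrite closed_loop_error_step.
have := sqnormD3_le ((1 - alpha) *: e k w) (xi k w)
  (- ((t ^+ 2 / 2) *: ubar k w)).
by rewrite sqnormN !sqnormZ !mulrA.
Qed.

Local Open Scope ereal_scope.

Lemma mean_square_error_step k :
  \int[P]_w (sqnorm (e k.+1 w))%:E <=
  (2 * (1 - alpha) ^+ 2)%:E * \int[P]_w (sqnorm (e k w))%:E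
  + (2 * sigma)%:E + (4 * (t ^+ 2 / 2) ^+ 2)%:E * gaussian_second_moment W.
Proof.
apply: le_trans
  (ge0_le_integral_lincomb3 _ _ _ _ _ _ _ _ _ _ _ (sqnorm_error_step k)) _.
all: try by rewrite mulr_ge0 ?sqr_ge0.
all: try by rewrite ler0n.
all: try by move=> w; exact: sqnorm_ge0.
- apply: measurable_sqnorm; exact: measurable_tracking_error.
- apply: measurable_sqnorm; exact: measurable_tracking_error.
- apply: measurable_sqnorm; exact: measurable_xi.
- apply: measurable_sqnorm; exact: measurable_cV.
apply: leeD; first apply: leeD.
- exact: lexx.
- rewrite (_ : 4%:E = 2%:E * 2%:E) -?muleA ?EFinM; last first.
    by rewrite -EFinM; congr EFin; lra.
  apply: lee_wpmul2l; first by rewrite lee_fin.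
  by rewrite -expectationE; exact: xi_bound.
- apply: lee_wpmul2l; first by rewrite lee_fin mulr_ge0 ?sqr_ge0.
  have mubar_k := measurable_cV (mubar k).
  by rewrite -(integral_sqnorm_gaussian0 _ _ _ (ubar_gauss k) mubar_k).
Qed.

Lemma mean_square_error_bounded :
  (forall i, (0 < W i i)%R) -> (2 * (1 - alpha) ^+ 2 < 1)%R ->
  'E_P[fun w => sqnorm (e 0%N w)] < +oo ->
  exists M : R, forall k, 'E_P[fun w => sqnorm (e k w)] <= M%:E.
Proof.
move=> W_diag_gt0 rate_lt1; rewrite expectationE => e0_lty.
have m2_fin := gaussian_second_moment_fin_num _ W_diag_gt0.
suff [M e_le] : exists M : R, forall k, \int[P]_w (sqnorm (e k w))%:E <= M%:E.
  by exists M => k; rewrite expectationE.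
apply: (affine_contraction_bounded _ (2 * (1 - alpha) ^+ 2)
  (2 * sigma + 4 * (t ^+ 2 / 2) ^+ 2 * fine (gaussian_second_moment W))) => //.
- by rewrite rate_lt1 andbT mulr_ge0 ?sqr_ge0.
- move=> k; rewrite EFinD (EFinM _ (fine _)) fineK // addeA.
  exact: mean_square_error_step.
Qed.

End closed_loop.

Lemma sqr_onem_lt_half {R : rcfType} (a : R) :
  1 - 1 / Num.sqrt 2 < a < 1 + 1 / Num.sqrt 2 -> (1 - a) ^+ 2 < 1 / 2.
Proof.
have r2 : (1 / Num.sqrt 2) ^+ 2 = 1 / 2 :> R.
  by rewrite expr_div_n expr1n sqr_sqrtr.
move: (1 / Num.sqrt 2) r2 => r r2 /andP[a_gt a_lt]; nra.
Qed.

Theorem mainTheorem2 (d : measure_display) (T : measurableType d)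
  (R : realType) (P : probability T R)
  (t alpha shat scheck : R) (W : 'M[R]_3) (bqs : 'cV[R]_3)
  (Ups Upshat : nat -> T -> 'cV[R]_(3 + 3))
  (Rot : nat -> T -> 'M[R]_3) (ubar : nat -> T -> 'cV[R]_3) :
  0 < t ->
  0 < shat -> 0 < scheck -> loewner_bounds W shat scheck ->
  (forall k w, is_SO3 (Rot k w)) ->
  (* measurability of the primitive random quantities *)
  (forall i, measurable_fun setT (fun w => Ups 0%N w i 0)) ->
  (forall k i, measurable_fun setT (fun w => Upshat k w i 0)) ->
  (forall k i j, measurable_fun setT (fun w => Rot k w i j)) ->
  (forall k i, measurable_fun setT (fun w => ubar k w i 0)) ->
  (* target acceleration: zero-mean Gaussian, covariance W, independent of
     the other quantities at time k *)
  (forall k, gaussian0 P (ubar k) W) ->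
  (forall k, indep_families P (fun i : 'I_3 => fun w => ubar k w i 0)
               (time_k_coords (Ups k) (Upshat k) (Rot k) (Rot k.+1))) ->
  (* closed-loop dynamics *)
  (forall k w, Ups k.+1 w =
     Amat t *m Ups k w +
     Bmat t *m (Rot k w *m control alpha t (Rot k w) (Upshat k w) bqs
                - ubar k w)) ->
  (* finite initial mean-square tracking error *)
  ('E_P[fun w => sqnorm (posq (Ups 0%N w) - Rot 0%N w *m bqs)] < +oo)%E ->
  (* sigma < oo *)
  (ereal_sup (range (fun k => 2%:E *
     'E_P[fun w => sqnorm (alphabar alpha t *m (Ups k w - Upshat k w)
                           + (Rot k w - Rot k.+1 w) *m bqs)]))%E < +oo)%E ->
  1 - 1 / Num.sqrt 2 < alpha < 1 + 1 / Num.sqrt 2 ->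
  2 * (1 - alpha) ^+ 2 - 1 < 0 /\
  exists M : R, forall k,
    ('E_P[fun w => sqnorm (posq (Ups k w) - Rot k w *m bqs)] <= M%:E)%E.

Proof.
(* The bound of [sqnormD3_le] has no cross terms. *)
move=> t_gt0 shat_gt0 _ W_bounds Rot_SO3 mUps0 mUpshat mRot mubar ubar_gauss _
  dynamics e0_lty sigma_lty /sqr_onem_lt_half gain_lt.
have rate_lt1 : 2 * (1 - alpha) ^+ 2 < 1 by lra.
split; first by lra.
have W_diag_gt0 i : 0 < W i i.
  exact: lt_le_trans shat_gt0 (loewner_bounds_diag i W_bounds).
have xi_bound k := le_fine_ereal_sup (imageT _ k) sigma_lty.
exact: (mean_square_error_bounded t_gt0 Rot_SO3 mUps0 mUpshat mRot mubar
  ubar_gauss dynamics xi_bound W_diag_gt0 rate_lt1 e0_lty).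
Qed.
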